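(* Let $(x_1,Y_1),\dots,(x_T,Y_T)$ be an arbitrary sequence of examples with $x_t\in\mathbb{R}^d$ and $Y_t\subseteq\mathcal{Y}$, and let $\delta>0$, $\eta>0$. Let $W_1,\dots,W_T$ be the iterates produced by SALT with parameters $\delta,\eta$ on this sequence. Then for any $U_*=[u_*^{(1)},\dots,u_*^{(L+1)}]\in\arg\min_{U\in\mathbb{R}^{d\times(L+1)}}\sum_{t=1}^T f_t(U)$, $$\sum_{t=1}^T\bigl(f_t(W_t)-f_t(U_* )\bigr)\le\Bigl(\frac{Q}{2\eta}+\eta\Bigr)\sum_{i=1}^{L+1}\sum_{j=1}^d\|G^{(i)}_{1:T,j}\|_2+\frac{\delta}{2\eta}\|U_*\|_F^2,$$ where $Q=\max_{i\in[L+1],\,t\in[T]}\|w_t^{(i)}-u_*^{(i)}\|_\infty^2$.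
   Context: Let $L\ge 1$, $d\ge 1$, $[n]=\{1,\dots,n\}$, $\mathcal{Y}=[L]$. A multi-label classifier is a matrix $W=[w^{(1)},\dots,w^{(L+1)}]\in\mathbb{R}^{d\times(L+1)}$ (columns $w^{(i)}\in\mathbb{R}^d$); $\|\cdot\|_F$ is the Frobenius norm. For the $t$-th example $(x_t,Y_t)$, with $x_t\in\mathbb{R}^d$, $Y_t\subseteq\mathcal{Y}$ and $\bar Y_t=\mathcal{Y}\setminus Y_t$, the loss is $$f_t(W)=\frac{1}{|Y_t|}\sum_{i\in Y_t}\max\{0,1-(x_t^\top w^{(i)}-x_t^\top w^{(L+1)})\}+\frac{1}{|\bar Y_t|}\sum_{i\in\bar Y_t}\max\{0,1-(x_t^\top w^{(L+1)}-x_t^\top w^{(i)})\},$$ where a term whose index set is empty is taken to be $0$. Given a current classifier $W_t=[w_t^{(1)},\dots,w_t^{(L+1)}]$, define $a_t^{(i)}=\mathbb{1}[x_t^\top w_t^{(i)}-x_t^\top w_t^{(L+1)}<1]$, $b_t^{(i)}=\mathbb{1}[x_t^\top w_t^{(L+1)}-x_t^\top w_t^{(i)}<1]$, $a_t=\sum_{j\in Y_t}a_t^{(j)}$, $b_t=\sum_{j\in\bar Y_t}b_t^{(j)}$, and $\nabla_t^{(i)}=-\frac{a_t^{(i)}}{|Y_t|}x_t$ if $i\in Y_t$; $\nabla_t^{(i)}=\frac{b_t^{(i)}}{|\bar Y_t|}x_t$ if $i\in\bar Y_t$; $\nabla_t^{(L+1)}=\bigl(\frac{a_t}{|Y_t|}-\frac{b_t}{|\bar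 Y_t|}\bigr)x_t$, where $\frac{a_t}{|Y_t|}$ (resp. $\frac{b_t}{|\bar Y_t|}$) is taken to be $0$ when $Y_t=\emptyset$ (resp. $\bar Y_t=\emptyset$). SALT (second-order adaptive label thresholding) with parameters $\delta>0,\eta>0$: $W_1=0$; at round $t$, compute $\nabla_t^{(i)}$ at the current iterate $W_t$ for all $i\in[L+1]$; let $G^{(i)}_{1:t}=[\nabla_1^{(i)},\dots,\nabla_t^{(i)}]\in\mathbb{R}^{d\times t}$ and let $G^{(i)}_{1:t,j}\in\mathbb{R}^t$ denote its $j$-th row; let $s^{(i)}_t\in\mathbb{R}^d$ with $s^{(i)}_{t,j}=\|G^{(i)}_{1:t,j}\|_2$, and $H_t^{(i)}=\delta I+\mathrm{diag}(s_t^{(i)})$; then $$W_{t+1}=\arg\min_{W}\sum_{i=1}^{L+1}\Bigl(\frac{1}{2\eta}(w^{(i)}-w_t^{(i)})^\top H_t^{(i)}(w^{(i)}-w_t^{(i)})+(\nabla_t^{(i)})^\top w^{(i)}\Bigr),$$ i.e. $w_{t+1}^{(i)}=w_t^{(i)}-\eta (H_t^{(i)})^{-1}\nabla_t^{(i)}$ for all $i\in[L+1]$. *)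

From mathcomp Require Import all_boot all_order all_algebra.
From mathcomp Require Import reals.
Set Implicit Arguments. Unset Strict Implicit. Unset Printing Implicit Defensive.
Import Order.TTheory GRing.Theory Num.Theory.
Local Open Scope ring_scope.

Section SALT.
Variables (R : realType) (d L : nat).

(* Classifier W = [w^(1) .. w^(L+1)] : d x (L+1) matrix; column k : 'I_L.+1.
   Label i : 'I_L (label i+1 in the paper) corresponds to column lift ord_max i
   (value i); the threshold column w^(L+1) is ord_max. *)
Definition lab (i : 'I_L) : 'I_L.+1 := lift ord_max i.
Definition thr : 'I_L.+1 := ord_max.

Definition score (W : 'M[R]_(d, L.+1)) (x : 'cV[R]_d) (k : 'I_L.+1) : R :=
  (x^T *m W) 0 k.

Definition hinge (z : R) : R := Num.max 0 (1 - z).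

(* f_t(W).  If Y (resp. its complement) is empty, the corresponding term is
   0 (the sum is empty; also 0^-1 = 0 in MathComp). *)
Definition loss (x : 'cV[R]_d) (Y : {set 'I_L}) (W : 'M[R]_(d, L.+1)) : R :=
  (if #|Y| == 0%N then 0 else
     (#|Y|%:R)^-1 * \sum_(i in Y) hinge (score W x (lab i) - score W x thr))
  + (if #|~: Y| == 0%N then 0 else
     (#|~: Y|%:R)^-1 * \sum_(i in ~: Y) hinge (score W x thr - score W x (lab i))).

Definition acoef (x : 'cV[R]_d) (W : 'M[R]_(d, L.+1)) (i : 'I_L) : R :=
  (score W x (lab i) - score W x thr < 1)%R%:R.
Definition bcoef (x : 'cV[R]_d) (W : 'M[R]_(d, L.+1)) (i : 'I_L) : R :=
  (score W x thr - score W x (lab i) < 1)%R%:R.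

(* a_t / |Y_t| and b_t / |\bar Y_t|, taken to be 0 on empty index sets *)
Definition a_over (x : 'cV[R]_d) (Y : {set 'I_L}) W : R :=
  if #|Y| == 0%N then 0 else (\sum_(j in Y) acoef x W j) / #|Y|%:R.
Definition b_over (x : 'cV[R]_d) (Y : {set 'I_L}) W : R :=
  if #|~: Y| == 0%N then 0 else (\sum_(j in ~: Y) bcoef x W j) / #|~: Y|%:R.

Definition gcoef (x : 'cV[R]_d) (Y : {set 'I_L}) W (k : 'I_L.+1) : R :=
  match unlift thr k with
  | None => a_over x Y W - b_over x Y W
  | Some i => if i \in Y then - (acoef x W i / #|Y|%:R)
              else bcoef x W i / #|~: Y|%:R
  end.

Definition grad (x : 'cV[R]_d) (Y : {set 'I_L}) W : 'M[R]_(d, L.+1) :=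
  \matrix_(j < d, k < L.+1) (gcoef x Y W k * x j 0).

Variables (delta eta : R) (xs : nat -> 'cV[R]_d) (Ys : nat -> {set 'I_L}).

(* salt_state t = (W_{t+1}, S_t) where S_t j k = sum_{s=1}^t (nabla_s^(k))_j^2 *)
Fixpoint salt_state (t : nat) : 'M[R]_(d, L.+1) * 'M[R]_(d, L.+1) :=
  match t with
  | 0 => (0, 0)
  | t'.+1 =>
    let W := (salt_state t').1 in
    let S := (salt_state t').2 in
    let g := grad (xs t) (Ys t) W in
    let S' := \matrix_(j, k) (S j k + g j k ^+ 2) in
    (\matrix_(j, k) (W j k - eta * g j k / (delta + Num.sqrt (S' j k))), S')
  end.

(* W_t for t >= 1 (W_1 = 0) *)
Definition salt_W (t : nat) : 'M[R]_(d, L.+1) := (salt_state t.-1).1.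

Definition salt_grad (t : nat) : 'M[R]_(d, L.+1) := grad (xs t) (Ys t) (salt_W t).

End SALT.

(* Each loss f_t is convex and nabla_t is a subgradient
   of f_t at W_t (the hinge has subgradient -1[z < 1] at z), so the regret is
   at most sum_t <nabla_t, W_t - U>, a sum over the d (L+1) coordinates.  On
   each coordinate SALT is scalar AdaGrad with accumulated squared gradient
   A_t, and the potential
     2 eta sum_{s<=t} g_s (w_s - u) + (delta + sqrt A_t) (w_{t+1} - u)^2
   grows by at most (Q + 2 eta^2)(sqrt A_t - sqrt A_{t-1}) per step, because
   g^2 / (delta + sqrt (A + g^2)) <= 2 (sqrt (A + g^2) - sqrt A).  Telescoping
   and dividing by 2 eta gives the per-coordinate bound. *)

From mathcomp Require Import all_boot all_order all_algebra.
From mathcomp Require Import reals.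
From mathcomp Require Import ring lra.
Import Order.TTheory GRing.Theory Num.Theory.
Set Implicit Arguments. Unset Strict Implicit. Unset Printing Implicit Defensive.
Local Open Scope ring_scope.

Lemma hinge_subgradient (R : realType) (z z' : R) :
  hinge z - hinge z' <= (z < 1)%R%:R * (z' - z).
Proof.
by rewrite /hinge !maxElt; case: ifPn => ?; case: ifPn => ?; case: ltrP => ? /=; lra.
Qed.

Lemma if_eq0_invnM (R : unitRingType) (n : nat) (a : R) :
  (if n == 0%N then 0 else n%:R^-1 * a) = n%:R^-1 * a.
Proof. by case: eqP => // ->; rewrite invr0 mul0r. Qed.

Lemma if_eq0_mulVn (R : unitRingType) (n : nat) (a : R) :
  (if n == 0%N then 0 else a / n%:R) = a / n%:R.
Proof. by case: eqP => // ->; rewrite invr0 mulr0. Qed.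

Section LossSubgradient.
Variables (R : realType) (d L : nat) (x : 'cV[R]_d) (Y : {set 'I_L}).

Lemma grad_dot_sub (W U : 'M[R]_(d, L.+1)) :
  \sum_(k < L.+1) \sum_(j < d) grad x Y W j k * (W j k - U j k) =
  \sum_(k < L.+1) gcoef x Y W k * (score W x k - score U x k).
Proof.
apply: eq_bigr => k _; rewrite /score !mxE -sumrB mulr_sumr.
by apply: eq_bigr => j _; rewrite !mxE; ring.
Qed.

Lemma gcoef_dot (W : 'M[R]_(d, L.+1)) (v : 'I_L.+1 -> R) :
  \sum_(k < L.+1) gcoef x Y W k * v k =
    (a_over x Y W - b_over x Y W) * v (thr L)
    - #|Y|%:R^-1 * \sum_(i in Y) acoef x W i * v (lab i)
    + #|~: Y|%:R^-1 * \sum_(i in ~: Y) bcoef x W i * v (lab i).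
Proof.
rewrite (bigD1_ord (thr L)) //= /gcoef unlift_none -addrA; congr (_ + _).
under eq_bigr => i _ do rewrite liftK.
rewrite (bigID (mem Y)) /= !mulr_sumr -sumrN; congr (_ + _).
  by apply: eq_bigr => i iY; rewrite iY; ring.
by apply: eq_big => [i | i iNY]; rewrite ?in_setC // (negbTE iNY); ring.
Qed.

Lemma loss_sub_le_grad_dot (W U : 'M[R]_(d, L.+1)) :
  loss x Y W - loss x Y U <=
    \sum_(k < L.+1) \sum_(j < d) grad x Y W j k * (W j k - U j k).
Proof.
rewrite grad_dot_sub gcoef_dot /loss /a_over /b_over !if_eq0_invnM !if_eq0_mulVn.
rewrite /acoef /bcoef; move: (score W x) (score U x) => sW sU.
have hingeY : \sum_(i in Y) hinge (sW (lab i) - sW (thr L))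
                - \sum_(i in Y) hinge (sU (lab i) - sU (thr L))
    <= (\sum_(i in Y) (sW (lab i) - sW (thr L) < 1)%R%:R) * (sW (thr L) - sU (thr L))
       - \sum_(i in Y) (sW (lab i) - sW (thr L) < 1)%R%:R * (sW (lab i) - sU (lab i)).
  rewrite -sumrB mulr_suml -sumrB; apply: ler_sum => i _.
  have := hinge_subgradient (sW (lab i) - sW (thr L)) (sU (lab i) - sU (thr L)); lra.
have hingeN : \sum_(i in ~: Y) hinge (sW (thr L) - sW (lab i))
                - \sum_(i in ~: Y) hinge (sU (thr L) - sU (lab i))
    <= \sum_(i in ~: Y) (sW (thr L) - sW (lab i) < 1)%R%:R * (sW (lab i) - sU (lab i))
       - (\sum_(i in ~: Y) (sW (thr L) - sW (lab i) < 1)%R%:R) * (sW (thr L) - sU (thr L)).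
  rewrite -sumrB mulr_suml -sumrB; apply: ler_sum => i _.
  have := hinge_subgradient (sW (thr L) - sW (lab i)) (sU (thr L) - sU (lab i)); lra.
have inv_card_ge0 (A : {set 'I_L}) : 0 <= #|A|%:R^-1 :> R by rewrite invr_ge0.
have := ler_wpM2l (inv_card_ge0 Y) hingeY; have := ler_wpM2l (inv_card_ge0 (~: Y)) hingeN.
lra.
Qed.

End LossSubgradient.

Lemma sqr_div_le_sqrt_incr (R : rcfType) (delta A g : R) :
  0 < delta -> 0 <= A ->
  g ^+ 2 / (delta + Num.sqrt (A + g ^+ 2))
    <= 2 * (Num.sqrt (A + g ^+ 2) - Num.sqrt A).
Proof.
move=> delta_gt0 A_ge0.
set a := Num.sqrt A; set b := Num.sqrt (A + g ^+ 2).
have a_le_b : a <= b by rewrite ler_sqrt ?addr_ge0 ?sqr_ge0 // lerDl sqr_ge0.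
have g2E : g ^+ 2 = (b - a) * (b + a).
  rewrite (_ : (b - a) * (b + a) = b ^+ 2 - a ^+ 2); last by ring.
  by rewrite !sqr_sqrtr ?addr_ge0 ?sqr_ge0 //; ring.
rewrite ler_pdivrMr ?g2E; last by apply: ltr_wpDr; rewrite ?sqrtr_ge0.
have ba_ge0 : 0 <= b - a by rewrite subr_ge0.
have := ler_wpM2l ba_ge0 (_ : b + a <= 2 * (delta + b)); lra.
Qed.

Lemma adagrad_step_le (R : rcfType) (delta eta A g e Q : R) :
  0 < delta -> 0 <= A -> e ^+ 2 <= Q ->
  2 * eta * g * e
    + (delta + Num.sqrt (A + g ^+ 2))
      * (e - eta * g / (delta + Num.sqrt (A + g ^+ 2))) ^+ 2
  <= (delta + Num.sqrt A) * e ^+ 2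
     + (Q + 2 * eta ^+ 2) * (Num.sqrt (A + g ^+ 2) - Num.sqrt A).
Proof.
move=> delta_gt0 A_ge0 eQ.
have incr := sqr_div_le_sqrt_incr g delta_gt0 A_ge0.
set a := Num.sqrt A in incr *; set b := Num.sqrt (A + g ^+ 2) in incr *.
have a_le_b : a <= b by rewrite ler_sqrt ?addr_ge0 ?sqr_ge0 // lerDl sqr_ge0.
have h_gt0 : 0 < delta + b by apply: ltr_wpDr; rewrite ?sqrtr_ge0.
have -> : 2 * eta * g * e + (delta + b) * (e - eta * g / (delta + b)) ^+ 2
        = (delta + b) * e ^+ 2 + eta ^+ 2 * (g ^+ 2 / (delta + b)).
  by field; rewrite gt_eqF.
have := ler_wpM2l (_ : 0 <= b - a) eQ; have := ler_wpM2l (sqr_ge0 eta) incr.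
lra.
Qed.

Section AdaGradCoordinate.
Variables (R : rcfType) (delta eta u : R) (g w : nat -> R).
Hypotheses (delta_gt0 : 0 < delta) (eta_gt0 : 0 < eta) (w1 : w 1%N = 0).
Hypothesis w_step : forall t, (1 <= t)%N ->
  w t.+1 = w t - eta * g t / (delta + Num.sqrt (\sum_(1 <= s < t.+1) g s ^+ 2)).

Lemma adagrad_potential_le (Q : R) (T : nat) :
  (forall t, (1 <= t <= T)%N -> (w t - u) ^+ 2 <= Q) ->
  2 * eta * \sum_(1 <= t < T.+1) g t * (w t - u)
    + (delta + Num.sqrt (\sum_(1 <= s < T.+1) g s ^+ 2)) * (w T.+1 - u) ^+ 2
  <= delta * u ^+ 2 + (Q + 2 * eta ^+ 2) * Num.sqrt (\sum_(1 <= s < T.+1) g s ^+ 2).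
Proof.
elim: T => [|T IH] wQ.
  by rewrite !big_geq // sqrtr0 w1 sub0r sqrrN; lra.
have wQ_T : forall t, (1 <= t <= T)%N -> (w t - u) ^+ 2 <= Q.
  by move=> t /andP[t_ge1 t_le_T]; apply: wQ; rewrite t_ge1 (leqW t_le_T).
have {wQ_T}IH := IH wQ_T.
set A := \sum_(1 <= s < T.+1) g s ^+ 2 in IH.
have step := adagrad_step_le eta (g T.+1) delta_gt0
  (sumr_ge0 _ (fun s _ => sqr_ge0 (g s)) : 0 <= A) (wQ T.+1 (leqnn _)).
rewrite (w_step (isT : (0 < T.+1)%N)) !(big_nat_recr _ _ _ (isT : (1 <= T.+1)%N)) /= -/A.
have -> : w T.+1 - eta * g T.+1 / (delta + Num.sqrt (A + g T.+1 ^+ 2)) - u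
        = w T.+1 - u - eta * g T.+1 / (delta + Num.sqrt (A + g T.+1 ^+ 2)) by ring.
lra.
Qed.

Lemma adagrad_regret_le (Q : R) (T : nat) :
  (forall t, (1 <= t <= T)%N -> (w t - u) ^+ 2 <= Q) ->
  \sum_(1 <= t < T.+1) g t * (w t - u)
  <= (Q / (2 * eta) + eta) * Num.sqrt (\sum_(1 <= s < T.+1) g s ^+ 2)
     + delta / (2 * eta) * u ^+ 2.
Proof.
move=> /adagrad_potential_le potential.
have eta2_gt0 : 0 < 2 * eta by rewrite mulr_gt0.
have -> : (Q / (2 * eta) + eta) * Num.sqrt (\sum_(1 <= s < T.+1) g s ^+ 2)
          + delta / (2 * eta) * u ^+ 2
        = (delta * u ^+ 2 + (Q + 2 * eta ^+ 2) * Num.sqrt (\sum_(1 <= s < T.+1) g s ^+ 2))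
          / (2 * eta).
  by field; rewrite gt_eqF.
rewrite ler_pdivlMr // mulrC; apply: le_trans potential.
by rewrite lerDl mulr_ge0 ?sqr_ge0 ?addr_ge0 ?sqrtr_ge0 ?(ltW delta_gt0).
Qed.

End AdaGradCoordinate.

Section SALTTrajectory.
Variables (R : realType) (d L : nat) (delta eta : R).
Variables (xs : nat -> 'cV[R]_d) (Ys : nat -> {set 'I_L}).

Local Notation W := (salt_W delta eta xs Ys).
Local Notation G := (salt_grad delta eta xs Ys).

Lemma salt_state_sqsum (t : nat) (j : 'I_d) (k : 'I_L.+1) :
  (salt_state delta eta xs Ys t).2 j k = \sum_(1 <= s < t.+1) G s j k ^+ 2.
Proof.
elim: t => [|t IH]; first by rewrite big_geq // mxE.
by rewrite (big_nat_recr _ _ _ (isT : (1 <= t.+1)%N)) /= mxE IH.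
Qed.

Lemma salt_W1 : W 1 = 0.
Proof. by []. Qed.

Lemma salt_W_step (t : nat) (j : 'I_d) (k : 'I_L.+1) : (1 <= t)%N ->
  W t.+1 j k =
  W t j k - eta * G t j k / (delta + Num.sqrt (\sum_(1 <= s < t.+1) G s j k ^+ 2)).
Proof.
case: t => // t _.
by rewrite /salt_W /= mxE mxE salt_state_sqsum (big_nat_recr _ _ _ (isT : (1 <= t.+1)%N)).
Qed.

End SALTTrajectory.

Lemma sqr_le_bigmax_norm (R : realDomainType) (m n T : nat)
    (f : nat -> 'I_m -> 'I_n -> R) (t : nat) (j : 'I_m) (k : 'I_n) :
  (1 <= t <= T)%N ->
  f t j k ^+ 2 <= \big[Num.max/0]_(k < n) \big[Num.max/0]_(1 <= t < T.+1)
                    (\big[Num.max/0]_(j < m) `|f t j k|) ^+ 2.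
Proof.
case/andP=> t_ge1 t_le_T.
set M := fun t k => \big[Num.max/0]_(j < m) `|f t j k|.
have f_le_M : `|f t j k| <= M t k.
  exact: (le_bigmax_seq 0 j xpredT (fun j => `|f t j k|) (mem_index_enum j)).
have M_le : M t k ^+ 2 <= \big[Num.max/0]_(1 <= t < T.+1) M t k ^+ 2.
  by apply: (le_bigmax_seq 0 t xpredT (fun t => M t k ^+ 2)); rewrite ?mem_index_iota ?t_ge1.
apply: le_trans (le_bigmax_seq 0 k xpredT
  (fun k => \big[Num.max/0]_(1 <= t < T.+1) M t k ^+ 2) (mem_index_enum k) isT).
apply: le_trans M_le; rewrite -real_normK ?num_real //.
by have := normr_ge0 (f t j k); nra.
Qed.

Theorem theorem2 (R : realType) (d L T : nat)
  (xs : nat -> 'cV[R]_d) (Ys : nat -> {set 'I_L}) (delta eta : R)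
  (Ustar : 'M[R]_(d, L.+1)) :
  0 < delta -> 0 < eta ->
  (forall U : 'M[R]_(d, L.+1),
     \sum_(1 <= t < T.+1) loss (xs t) (Ys t) Ustar
       <= \sum_(1 <= t < T.+1) loss (xs t) (Ys t) U) ->
  let W := salt_W delta eta xs Ys in
  let G := salt_grad delta eta xs Ys in
  let Q := \big[Num.max/0]_(k < L.+1) \big[Num.max/0]_(1 <= t < T.+1)
             (\big[Num.max/0]_(j < d) `|W t j k - Ustar j k|) ^+ 2 in
  \sum_(1 <= t < T.+1) (loss (xs t) (Ys t) (W t) - loss (xs t) (Ys t) Ustar)
    <= (Q / (2 * eta) + eta) *
         \sum_(k < L.+1) \sum_(j < d)
            Num.sqrt (\sum_(1 <= t < T.+1) G t j k ^+ 2)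
       + delta / (2 * eta) * \sum_(j < d) \sum_(k < L.+1) Ustar j k ^+ 2.
Proof.
move=> delta_gt0 eta_gt0 _; cbv zeta.
set W := salt_W delta eta xs Ys; set G := salt_grad delta eta xs Ys.
apply: (@le_trans _ _ (\sum_(k < L.+1) \sum_(j < d) \sum_(1 <= t < T.+1)
                         G t j k * (W t j k - Ustar j k))).
  under [X in _ <= X]eq_bigr => k _ do rewrite exchange_big /=.
  rewrite [X in _ <= X]exchange_big /=.
  by apply: ler_sum => t _; exact: loss_sub_le_grad_dot.
rewrite [X in delta / _ * X]exchange_big /= !mulr_sumr -big_split /=.
apply: ler_sum => k _; rewrite !mulr_sumr -big_split /=; apply: ler_sum => j _.
apply: adagrad_regret_le => //; first by rewrite /W salt_W1 mxE.
  by move=> t; exact: salt_W_step.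
by move=> t; exact: sqr_le_bigmax_norm (fun t j k => W t j k - Ustar j k) t j k.
Qed.
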